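(* Let $\rho:\mathbb R\to[0,\infty)$ be strictly convex with $\rho(0)=0$. For a nonempty finite index set $T$ and real numbers $(Y_i)_{i\in T}$ let $m_T$ denote the minimizer over $\mu\in\mathbb R$ of $\sum_{i\in T}\rho(Y_i-\mu)$. Then for every nonempty finite index set $S$, every family of real numbers $(Y_i)_{i\in S}$ and every partition $S=\bigcup_{j}S_j$ into finitely many pairwise disjoint nonempty sets $S_j$, \[\min_j m_{S_j}\le m_S\le \max_j m_{S_j}.\] *)

From HB Require Import structures.
From mathcomp Require Import all_boot all_order all_algebra.
From mathcomp Require Import reals.
Set Implicit Arguments. Unset Strict Implicit. Unset Printing Implicit Defensive.
Import Order.TTheory GRing.Theory Num.Theory.
Local Open Scope ring_scope.

Definition strictly_convex (R : realType) (f : R -> R) : Prop :=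
  forall x y t : R, x != y -> 0 < t -> t < 1 ->
    f (t * x + (1 - t) * y) < t * f x + (1 - t) * f y.

Definition mloss (R : realType) (I : finType) (rho : R -> R) (Y : I -> R)
  (T : {set I}) (mu : R) : R := \sum_(i in T) rho (Y i - mu).

Definition is_minimizer (R : realType) (I : finType) (rho : R -> R) (Y : I -> R)
  (T : {set I}) (m : R) : Prop :=
  forall mu : R, mloss rho Y T m <= mloss rho Y T mu.

(* The loss of every block is strictly convex, hence strictly decreasing to
   the left of its minimizer.  If every block minimizer exceeded m_S, then
   evaluating at the smallest block minimizer would strictly decrease the
   loss of every block, hence (summing over the partition) the loss of S
   below its minimum.  The upper bound follows by the reflection
   (rho, Y, mu) |-> (rho o -, -Y, -mu). *)

From HB Require Import structures.
From mathcomp Require Import all_boot all_order all_algebra.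
From mathcomp Require Import reals.
From mathcomp Require Import ring lra.
Set Implicit Arguments. Unset Strict Implicit. Unset Printing Implicit Defensive.
Import Order.TTheory GRing.Theory Num.Theory.
Local Open Scope ring_scope.

Section StrictlyConvex.
Variables (R : realType) (f : R -> R).
Hypothesis f_cvx : strictly_convex f.

Lemma strictly_convex_min_lt (m y : R) :
  (forall mu, f m <= f mu) -> y != m -> f m < f y.
Proof.
move=> fmin ym.
have := f_cvx ym (_ : 0 < 1 / 2) (_ : 1 / 2 < 1).
have := fmin (1 / 2 * y + (1 - 1 / 2) * m); lra.
Qed.

Lemma strictly_convex_lt_left_of_min (m x y : R) :
  (forall mu, f m <= f mu) -> y < x -> x <= m -> f x < f y.
Proof.
move=> fmin yx; rewrite le_eqVlt => /predU1P [xm | xm].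
  by rewrite xm in yx *; apply: strictly_convex_min_lt; rewrite // lt_eqF.
have ym : y != m by rewrite lt_eqF // (lt_trans yx).
pose t := (m - x) / (m - y).
have t_gt0 : 0 < t by rewrite divr_gt0 // subr_gt0 // (lt_trans yx).
have t_lt1 : t < 1 by rewrite ltr_pdivrMr ?subr_gt0 ?(lt_trans yx) // mul1r; lra.
have xE : t * y + (1 - t) * m = x by rewrite /t; field; lra.
have := f_cvx ym t_gt0 t_lt1; rewrite xE.
have : (1 - t) * f m <= (1 - t) * f y by rewrite ler_pM2l ?subr_gt0 ?fmin.
lra.
Qed.

End StrictlyConvex.

Section MLoss.
Variables (R : realType) (rho : R -> R) (I : finType) (Y : I -> R).

Lemma strictly_convex_mloss (B : {set I}) :
  strictly_convex rho -> B != set0 -> strictly_convex (mloss rho Y B).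
Proof.
move=> rho_cvx /set0Pn [x xB] u v t uv t_gt0 t_lt1.
rewrite /mloss !mulr_sumr -big_split /=.
apply: ltr_sum => [|i _]; first by apply/hasP; exists x; rewrite ?mem_index_enum.
have -> : Y i - (t * u + (1 - t) * v) = t * (Y i - u) + (1 - t) * (Y i - v).
  by ring.
by apply: rho_cvx; rewrite // (inj_eq (addrI _)) eqr_opp.
Qed.

Lemma mloss_partition (P : {set {set I}}) (S : {set I}) (mu : R) :
  partition P S -> mloss rho Y S mu = \sum_(B in P) mloss rho Y B mu.
Proof. by case/and3P=> /eqP <- tiP _; rewrite /mloss big_trivIset. Qed.

End MLoss.

Lemma exists_block_minimizer_le (R : realType) (rho : R -> R)
  (rho_cvx : strictly_convex rho) (I : finType) (Y : I -> R)
  (S : {set I}) (P : {set {set I}}) (m : {set I} -> R) (mS : R) :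
  S != set0 -> partition P S -> is_minimizer rho Y S mS ->
  (forall B, B \in P -> is_minimizer rho Y B (m B)) ->
  exists2 B, B \in P & m B <= mS.
Proof.
move=> /set0Pn [x xS] partP hmS hm.
have [/exists_inP [B BP mBS] | /exists_inP noB] :=
  boolP [exists B in P, m B <= mS]; first by exists B.
have PB0 : pblock P x \in P by rewrite pblock_mem // (cover_partition partP).
have [B0 B0P B0min] := arg_minP m PB0.
have : mloss rho Y S (m B0) < mloss rho Y S mS.
  rewrite !(mloss_partition rho Y _ partP).
  apply: ltr_sum => [|B BP]; first by apply/hasP; exists B0; rewrite ?mem_index_enum.
  have B_neq0 : B != set0 by apply: contraTneq BP => ->; case/and3P: partP.
  apply: strictly_convex_lt_left_of_min (hm B BP) _ (B0min B BP).
    exact: strictly_convex_mloss.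
  by rewrite ltNge; apply/negP => mB0S; apply: noB; exists B0.
by rewrite ltNge hmS.
Qed.

Lemma strictly_convex_reflect (R : realType) (rho : R -> R) :
  strictly_convex rho -> strictly_convex (fun z => rho (- z)).
Proof.
move=> rho_cvx a b t ab t_gt0 t_lt1.
have -> : - (t * a + (1 - t) * b) = t * - a + (1 - t) * - b by ring.
by apply: rho_cvx; rewrite ?eqr_opp.
Qed.

Lemma is_minimizer_reflect (R : realType) (rho : R -> R) (I : finType)
  (Y : I -> R) (T : {set I}) (mu : R) :
  is_minimizer rho Y T mu ->
  is_minimizer (fun z => rho (- z)) (fun i => - Y i) T (- mu).
Proof.
have lossE nu : mloss (fun z => rho (- z)) (fun i => - Y i) T (- nu) =
    mloss rho Y T nu.
  by apply: eq_bigr => i _; rewrite opprB opprK addrC.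
by move=> hmu nu; rewrite lossE -[nu]opprK lossE.
Qed.

Theorem lemma3p2 (R : realType) (rho : R -> R)
  (rho_ge0 : forall x, 0 <= rho x) (rho0 : rho 0 = 0)
  (rho_cvx : strictly_convex rho)
  (I : finType) (Y : I -> R) (S : {set I}) (S_nonempty : S != set0)
  (P : {set {set I}}) (P_part : partition P S)
  (m : {set I} -> R) (mS : R)
  (hmS : is_minimizer rho Y S mS)
  (hm : forall B, B \in P -> is_minimizer rho Y B (m B)) :
  (exists2 B, B \in P & m B <= mS) /\ (exists2 B, B \in P & mS <= m B).
Proof.
split; first exact: (exists_block_minimizer_le rho_cvx S_nonempty P_part hmS hm).
have [B BP] := exists_block_minimizer_le (m := fun B => - m B)
  (strictly_convex_reflect rho_cvx) S_nonempty P_part (is_minimizer_reflect hmS)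
  (fun B BP => is_minimizer_reflect (hm B BP)).
by rewrite lerN2; exists B.
Qed.
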